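(* Let $L$ be a finite distributive lattice, let $m$ be the maximum size of an antichain in $\operatorname{Mi}(L)$, and put $Q_L(x)=\sum_{k=0}^m q_k(L)x^k$ and $D_L^-(x)=\sum_{k=0}^m d_k^-(L)x^k$. Then $$Q_L(-1)=q_0(L)-q_1(L)+q_2(L)-q_3(L)+\cdots=D_L^-(0)=1,$$ and $$\left.\frac{\mathrm{d}Q_L(x)}{\mathrm{d}x}\right|_{x=-1}=\left.\frac{\mathrm{d}D_L^-(x)}{\mathrm{d}x}\right|_{x=0}=d_1^-(L)=|\operatorname{Mi}(L)|.$$
   Context: $\operatorname{Mi}(L)$ is the set of meet-irreducible elements of $L$, as a poset under the order of $L$. For a finite lattice $M$ and $k\ge0$, $q_k(M)$ is the number of convex sublattices (intervals) of $M$ isomorphic to the Boolean lattice $\mathbf{B}_k$ with $2^k$ elements. For $a\in M$, $\deg^-_M(a)$ is the number of elements of $M$ covering $a$, and $d_k^-(M)$ is the number of $a\in M$ with $\deg^-_M(a)=k$. *)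

From HB Require Import structures.
From mathcomp Require Import all_boot all_order all_algebra.
Set Implicit Arguments. Unset Strict Implicit. Unset Printing Implicit Defensive.
Import Order.Theory GRing.Theory.

Section LatticeDefs.
Context {disp : Order.disp_t} {L : finTBDistrLatticeType disp}.
Local Open Scope order_scope.

Definition covers (a b : L) : bool :=
  (a < b) && [forall c : L, ~~ ((a < c) && (c < b))].

Definition deg_down (a : L) : nat := #|[set b : L | covers a b]|.

Definition dk (k : nat) : nat := #|[set a : L | deg_down a == k]|.

Definition meet_irr (a : L) : bool :=
  (a != \top) && [forall x : L, forall y : L, (x `&` y == a) ==> ((a == x) || (a == y))].

Definition Mi : {set L} := [set a : L | meet_irr a].

Definition Mi_antichain (A : {set L}) : bool :=
  (A \subset Mi) && [forall x in A, forall y in A, (x != y) ==> ~~ (x >=< y)].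

Definition width_Mi : nat := \max_(A : {set L} | Mi_antichain A) #|A|.

(* the interval [a,b] is order-isomorphic (hence lattice-isomorphic) to the
   Boolean lattice B_k = ({set 'I_k}, \subset), with 2^k elements *)
Definition interval_is_boolean (k : nat) (a b : L) : bool :=
  [exists f : {ffun {set 'I_k} -> L},
     [forall X : {set 'I_k}, forall Y : {set 'I_k}, (X \subset Y) == (f X <= f Y)] &&
     [forall x : L, ((a <= x) && (x <= b)) == (x \in codom f)]].

Definition qk (k : nat) : nat :=
  #|[set p : L * L | (p.1 <= p.2) && interval_is_boolean k p.1 p.2]|.

End LatticeDefs.

Local Open Scope ring_scope.
Definition QL {disp : Order.disp_t} (L : finTBDistrLatticeType disp) : {poly int} :=
  \poly_(k < (@width_Mi disp L).+1) ((@qk disp L k)%:R).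
Definition DL {disp : Order.disp_t} (L : finTBDistrLatticeType disp) : {poly int} :=
  \poly_(k < (@width_Mi disp L).+1) ((@dk disp L k)%:R).

From HB Require Import structures.
From mathcomp Require Import all_boot all_order all_algebra.
Import Order.Theory GRing.Theory.
Set Implicit Arguments. Unset Strict Implicit. Unset Printing Implicit Defensive.

(* For each upper cover c of a, a maximal element above a avoiding c is
   meet-irreducible, and distinct covers give incomparable such elements; hence
   every element has at most m upper covers, and the truncation at degree m in
   Q_L and D_L^- loses nothing.  By distributivity, S |-> [a, a \/ \/S] is a
   bijection from the k-sets of upper covers of a onto the Boolean intervals of
   rank k with bottom a, so q_k(L) = sum_a C(deg^- a, k), that is
   Q_L(x) = sum_a (1 + x)^(deg^- a) = D_L^-(x + 1).  Evaluation and the chain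
   rule at x = -1 then reduce everything to d_0^- = 1 (only the top has no upper
   cover) and d_1^- = |Mi(L)| (meet-irreducibles are exactly the elements with a
   unique upper cover). *)

Lemma meet_joinsr disp (L : bDistrLatticeType disp) (I : finType) (P : {pred I})
    (F : I -> L) (x : L) :
  (x `&` \join_(i | P i) F i = \join_(i | P i) (x `&` F i))%O.
Proof. by apply: (big_morph (Order.meet x)); [exact: meetUr | exact: meetx0]. Qed.

Section Covers.
Context {disp : Order.disp_t} {L : finTBDistrLatticeType disp}.
Local Open Scope order_scope.
Implicit Types (a b c x y z : L) (S T : {set L}).

Definition upper_covers a : {set L} := [set c | covers a c].

Lemma coversP a c : reflect (a < c /\ forall z, a < z -> ~~ (z < c)) (covers a c).
Proof.
apply: (iffP andP) => -[ac gap]; split=> //.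
  by move=> z az; move/forallP: gap => /(_ z); rewrite az.
by apply/forallP => z; apply/negP => /andP[/gap/negP].
Qed.

Lemma covers_lt a c : covers a c -> a < c.
Proof. by case/coversP. Qed.

Lemma meet_covers a c x : covers a c -> a <= x -> ~~ (c <= x) -> x `&` c = a.
Proof.
move=> /coversP[ac gap] ax ncx.
have axc : a <= x `&` c by rewrite lexI ax ltW.
have xc : x `&` c < c.
  by rewrite lt_neqAle leIr andbT; apply: contraNneq ncx => /meet_idPr.
case: (eqVneq a (x `&` c)) => [//|neq].
by have := gap (x `&` c); rewrite xc lt_neqAle neq axc => /(_ isT).
Qed.

Lemma meet_upper_covers a c c' : covers a c -> covers a c' -> c != c' -> c `&` c' = a.
Proof.
move=> cc cc' neq; apply: (meet_covers cc' (ltW (covers_lt cc))).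
apply: contra neq => le; have /coversP[_ /(_ c' (covers_lt cc'))] := cc.
by rewrite lt_neqAle le andbT negbK eq_sym.
Qed.

Definition ideal_size z : nat := #|[set y | y <= z]|.

Lemma ideal_size_lt y z : y < z -> (ideal_size y < ideal_size z)%N.
Proof.
move=> yz; apply/proper_card/properP; split.
  by apply/subsetP => u; rewrite !inE => /le_trans->//; exact: ltW.
by exists z; rewrite !inE ?lexx // lt_geF.
Qed.

Lemma exists_covers a x : a < x -> exists2 c, covers a c & c <= x.
Proof.
pose P z := (a < z) && (z <= x); move=> ax.
have [|c /andP[ac cx] cmin] := @arg_minnP _ x P ideal_size; first by rewrite /P ax lexx.
exists c => //; apply/coversP; split=> // z az; apply/negP => zc.
have /cmin : P z by rewrite /P az (le_trans (ltW zc) cx).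
by rewrite leqNgt ideal_size_lt.
Qed.

Lemma deg_down_eq0 a : (deg_down a == 0%N) = (a == \top).
Proof.
rewrite cards_eq0; apply/eqP/eqP => [|->]; last first.
  by apply/setP => c; rewrite !inE; apply/negP => /covers_lt/lt_geF; rewrite lex1.
apply: contra_eq => nt; have [|c ac _] := @exists_covers a \top.
  by rewrite lt_neqAle nt lex1.
by apply/set0Pn; exists c; rewrite inE.
Qed.

Lemma dk0 : dk (L:=L) 0 = 1%N.
Proof.
rewrite /dk -(cards1 (\top : L)); apply: eq_card => a.
by rewrite !inE deg_down_eq0.
Qed.

Lemma meet_irrP a :
  reflect (a != \top /\ forall x y, a < x -> a < y -> x `&` y != a) (meet_irr a).
Proof.
apply: (iffP andP) => -[nt irr]; split=> //.
  move=> x y ax ay; apply/eqP => xy; move/forallP/(_ x)/forallP/(_ y)/implyP: irr.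
  by rewrite xy eqxx => /(_ isT) /orP[] /eqP e; rewrite e ltxx in ax ay.
apply/forallP => x; apply/forallP => y; apply/implyP => /eqP xy.
have ax : a <= x by rewrite -xy leIl.
have ay : a <= y by rewrite -xy leIr.
apply: contraT; rewrite negb_or => /andP[nax nay].
by move: (irr x y); rewrite !lt_neqAle nax nay ax ay xy eqxx => /(_ isT isT).
Qed.

Lemma meet_irr_deg_down a : meet_irr a = (deg_down a == 1%N).
Proof.
apply/meet_irrP/cards1P => [[nt irr] | [c covc]].
  have [|c ac _] := @exists_covers a \top; first by rewrite lt_neqAle nt lex1.
  exists c; apply/setP => c'; rewrite !inE; apply/idP/eqP => [ac'|-> //].
  apply: contraTeq (irr _ _ (covers_lt ac) (covers_lt ac')) => neq.
  by rewrite negbK (meet_upper_covers ac ac') // eq_sym.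
have cov c' : covers a c' = (c' == c) by rewrite -in_set1 -covc inE.
split=> [|x y ax ay]; first by rewrite -deg_down_eq0 /deg_down covc cards1.
have [c1 + c1x] := exists_covers ax; rewrite cov => /eqP c1c.
have [c2 + c2y] := exists_covers ay; rewrite cov => /eqP c2c.
subst c1 c2.
apply: contraTneq (_ : c <= x `&` y) => [->|]; last by rewrite lexI c1x c2y.
by rewrite lt_geF // covers_lt // cov.
Qed.

Lemma dk1 : dk (L:=L) 1 = #|Mi (L:=L)|.
Proof. by apply: eq_card => a; rewrite !inE meet_irr_deg_down. Qed.

(* Maximizing the strictly monotone [ideal_size] gives an order-maximal element. *)
Definition max_avoiding a c : L :=
  [arg max_(z > a | (a <= z) && ~~ (c <= z)) ideal_size z].

Lemma max_avoidingP a c : covers a c ->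
  [/\ a <= max_avoiding a c, ~~ (c <= max_avoiding a c)
    & forall x, max_avoiding a c < x -> c <= x].
Proof.
move=> /covers_lt ac.
have Pa : (a <= a) && ~~ (c <= a) by rewrite lexx lt_geF.
have : extremum_spec geq (fun z => (a <= z) && ~~ (c <= z)) ideal_size
    (max_avoiding a c) := arg_maxnP ideal_size Pa.
case=> m /andP[am ncm] mmax.
split=> // x mx; apply: contraT => ncx.
have /mmax/= : (a <= x) && ~~ (c <= x) by rewrite ncx (le_trans am (ltW mx)).
by rewrite leqNgt ideal_size_lt.
Qed.

Lemma max_avoiding_Mi a c : covers a c -> max_avoiding a c \in Mi.
Proof.
move=> /max_avoidingP[_ ncm above]; rewrite inE; apply/meet_irrP; split.
  by apply: contraNneq ncm => ->; rewrite lex1.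
by move=> x y /above cx /above cy; apply: contraNneq ncm => <-; rewrite lexI cx cy.
Qed.

Lemma le_max_avoiding a c c' :
  covers a c -> covers a c' -> c != c' -> c' <= max_avoiding a c.
Proof.
move=> cc cc' neq; have [am ncm above] := max_avoidingP cc.
apply: contraT => nc'm.
have h : c <= max_avoiding a c `|` c'.
  apply: above; rewrite lt_neqAle leUl andbT.
  by apply: contraNneq nc'm => /esym/join_idPl.
suff /(lt_le_trans (covers_lt cc)) : c <= a by rewrite ltxx.
rewrite -(meet_idPl h) meetUr meetC (meet_covers cc am ncm).
by rewrite (meet_upper_covers cc cc' neq) joinxx.
Qed.

Lemma max_avoiding_le a c c' : covers a c -> covers a c' ->
  (max_avoiding a c <= max_avoiding a c') = (c == c').
Proof.
move=> cc cc'; case: (eqVneq c c') => [-> | neq]; first exact: lexx.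
have [_ nc'm' _] := max_avoidingP cc'.
by apply: contraNF nc'm' => /(le_trans (le_max_avoiding cc cc' neq)).
Qed.

Lemma deg_down_le_width a : (deg_down a <= width_Mi (L:=L))%N.
Proof.
have inj : {in upper_covers a &, injective (max_avoiding a)}.
  move=> c c'; rewrite !inE => cc cc' e.
  by apply/eqP; rewrite -(max_avoiding_le cc cc') e.
rewrite /deg_down -/(upper_covers a) -(card_in_imset inj).
apply: (leq_bigmax_cond (F := fun A : {set L} => #|A|)); apply/andP; split.
  by apply/subsetP => x /imsetP[c]; rewrite inE => cc ->; exact: max_avoiding_Mi.
apply/forall_inP => x /imsetP[c]; rewrite inE => cc ->.
apply/forall_inP => y /imsetP[c']; rewrite inE => cc' ->.
apply/implyP => neq; rewrite /Order.comparable !max_avoiding_le // eq_sym orbb.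
by apply: contraNneq neq => ->.
Qed.

Definition cover_join a S : L := a `|` \join_(c in S) c.

Lemma cover_join_ge a S : a <= cover_join a S.
Proof. exact: leUl. Qed.

Lemma le_cover_join a S c : c \in S -> c <= cover_join a S.
Proof. by move=> cS; apply: lexUr; exact: joins_sup. Qed.

Lemma cover_join_le a S u : a <= u -> {in S, forall c, c <= u} -> cover_join a S <= u.
Proof. by move=> au Su; rewrite leUx au; apply/joinsP. Qed.

Lemma cover_joinS a S T : S \subset T -> cover_join a S <= cover_join a T.
Proof.
move=> ST; apply: cover_join_le => [|c /(subsetP ST)]; first exact: cover_join_ge.
exact: le_cover_join.
Qed.

Lemma le_cover_join_covers a S c : S \subset upper_covers a -> covers a c ->
  (c <= cover_join a S) = (c \in S).
Proof.
move=> Scov cc; apply/idP/idP => [le|]; last exact: le_cover_join.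
apply: contraT => ncS; suff /(lt_le_trans (covers_lt cc)) : c <= a by rewrite ltxx.
rewrite -(meet_idPl le) meetUr leUx leIr meet_joinsr; apply/joinsP => c' c'S.
have cc' : covers a c' by move: (subsetP Scov c' c'S); rewrite inE.
by rewrite (meet_upper_covers cc cc') //; apply: contraNneq ncS => ->.
Qed.

Lemma cover_joinK a S : S \subset upper_covers a ->
  [set c in upper_covers a | c <= cover_join a S] = S.
Proof.
move=> Scov; apply/setP => c; rewrite !inE; apply/andP/idP => [[cc]|cS].
  by rewrite le_cover_join_covers.
have := subsetP Scov c cS; rewrite inE => cc.
by rewrite cc le_cover_join_covers.
Qed.

Lemma cover_join_trace a S x :
  S \subset upper_covers a -> a <= x -> x <= cover_join a S ->
  x = cover_join a [set c in S | c <= x].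
Proof.
move=> Scov ax xJ; apply/le_anti/andP; split; last first.
  by apply: cover_join_le => // c; rewrite inE => /andP[].
rewrite -{1}(meet_idPl xJ) meetUr meet_joinsr leUx.
rewrite (le_trans (leIr _ _) (cover_join_ge _ _)) /=; apply/joinsP => c cS.
have [cx|ncx] := boolP (c <= x).
  by apply: le_trans (leIr _ _) _; apply: le_cover_join; rewrite inE cS.
have cc : covers a c by move: (subsetP Scov c cS); rewrite inE.
by rewrite (meet_covers cc ax ncx) cover_join_ge.
Qed.

Lemma cover_join_boolean a S : S \subset upper_covers a ->
  interval_is_boolean #|S| a (cover_join a S).
Proof.
move=> Scov; pose g (i : 'I_#|S|) : L := enum_val i.
have gcov (X : {set 'I_#|S|}) : g @: X \subset upper_covers a.
  by apply/subsetP => _ /imsetP[i _ ->]; apply: (subsetP Scov); exact: enum_valP.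
apply/existsP; exists [ffun X : {set 'I_#|S|} => cover_join a (g @: X)].
apply/andP; split.
  apply/forallP => X; apply/forallP => Y; rewrite !ffunE; apply/eqP; apply/idP/idP.
    by move=> XY; apply/cover_joinS/imsetS.
  move=> le; apply/subsetP => i iX.
  have cc : covers a (g i) by rewrite -inE (subsetP (gcov setT)) ?imset_f.
  rewrite -(mem_imset _ _ (@enum_val_inj _ (mem S))) -/(g i).
  rewrite -(le_cover_join_covers (gcov Y) cc).
  exact: le_trans (le_cover_join a (imset_f g iX)) le.
apply/forallP => x; apply/eqP; apply/idP/idP => [/andP[ax xJ]|/codomP[X ->]].
  apply/codomP; exists [set i | g i <= x]; rewrite ffunE {1}(cover_join_trace Scov ax xJ).
  congr (cover_join a _); apply/setP => c; rewrite inE; apply/andP/imsetP.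
    by case=> cS cx; exists (enum_rank_in cS c); rewrite ?inE /g enum_rankK_in.
  by case=> i; rewrite inE => gix ->; split; [exact: enum_valP|].
rewrite ffunE cover_join_ge; apply/cover_joinS/subsetP => _ /imsetP[i _ ->].
exact: enum_valP.
Qed.

Section BooleanInterval.
Variables (a b : L) (k : nat) (iso : {ffun {set 'I_k} -> L}).
Hypothesis iso_le : forall X Y : {set 'I_k}, (X \subset Y) = (iso X <= iso Y).
Hypothesis iso_onto : forall x, (a <= x <= b) = (x \in codom iso).

Let iso_inj : injective iso.
Proof. by move=> X Y e; apply/eqP; rewrite eqEsubset !iso_le e lexx. Qed.

Let iso_interval X : a <= iso X <= b.
Proof. by rewrite iso_onto codom_f. Qed.

Let ab : a <= b.
Proof. by case/andP: (iso_interval set0); exact: le_trans. Qed.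

Let iso_set0 : iso set0 = a.
Proof.
have /codomP[X aX] : a \in codom iso by rewrite -iso_onto lexx ab.
have /andP[+ _] := iso_interval set0.
by rewrite aX -iso_le subset0 => /eqP->.
Qed.

Let iso_setT : iso setT = b.
Proof.
have /codomP[X bX] : b \in codom iso by rewrite -iso_onto lexx ab.
have /andP[_] := iso_interval setT.
by rewrite bX -iso_le subTset => /eqP->.
Qed.

Let covers_iso1 i : covers a (iso [set i]).
Proof.
apply/coversP; split.
  rewrite -iso_set0 lt_neqAle -iso_le sub0set andbT (inj_eq iso_inj) eq_sym.
  by apply/set0Pn; exists i; rewrite inE.
move=> z az; apply/negP => zi.
have /codomP[Z zZ] : z \in codom iso.
  by rewrite -iso_onto (ltW az) (le_trans (ltW zi)) //; case/andP: (iso_interval [set i]).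
move: az zi; rewrite zZ -iso_set0 !lt_neqAle -!iso_le !(inj_eq iso_inj) subset1.
by case/andP=> /negbTE Z0 _ /andP[/negbTE ->]; rewrite eq_sym Z0.
Qed.

Lemma boolean_interval_cover_join :
  exists2 S : {set L}, (S \subset upper_covers a) && (#|S| == k) & b = cover_join a S.
Proof.
set S := (fun i => iso [set i]) @: [set: 'I_k].
have Sb : cover_join a S <= b.
  apply: cover_join_le ab _ => _ /imsetP[i _ ->].
  by case/andP: (iso_interval [set i]).
exists S.
  apply/andP; split; first by apply/subsetP => _ /imsetP[i _ ->]; rewrite inE.
  by rewrite card_imset ?cardsT ?card_ord // => i j /iso_inj/set1_inj.
apply/le_anti; rewrite Sb andbT.
have /codomP[Y eY] : cover_join a S \in codom iso by rewrite -iso_onto cover_join_ge.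
rewrite -iso_setT eY -iso_le; apply/subsetP => i _.
by rewrite -sub1set iso_le -eY; apply/le_cover_join/imset_f.
Qed.

End BooleanInterval.

Lemma interval_is_booleanP k a b :
  reflect (exists2 S : {set L},
             (S \subset upper_covers a) && (#|S| == k) & b = cover_join a S)
          (interval_is_boolean k a b).
Proof.
apply: (iffP idP) => [/existsP[iso /andP[/forallP iso_le /forallP iso_onto]]|].
  apply: (@boolean_interval_cover_join a b k iso) => [X Y|x].
    exact/eqP/(forallP (iso_le X)).
  exact/eqP/iso_onto.
by case=> S /andP[Scov /eqP <-] ->; exact: cover_join_boolean.
Qed.

Lemma card_boolean_intervals a k :
  #|[set b | interval_is_boolean k a b]| = 'C(deg_down a, k).
Proof.
have inj : {in [set S : {set L} | S \subset upper_covers a & #|S| == k] &,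
             injective (cover_join a)}.
  move=> S T /[!inE] /andP[Scov _] /andP[Tcov _] e.
  by rewrite -(cover_joinK Scov) e cover_joinK.
rewrite /deg_down -cards_draws -(card_in_imset inj); apply: eq_card => b.
rewrite inE; apply/interval_is_booleanP/imsetP => -[S].
  by exists S; rewrite ?inE.
by rewrite inE => ? ->; exists S.
Qed.

Lemma qk_sum k : qk (L:=L) k = (\sum_(a : L) 'C(deg_down a, k))%N.
Proof.
rewrite /qk; under eq_bigr => a _ do rewrite -card_boolean_intervals -sum1_card.
rewrite pair_big_dep /= -sum1_card; apply: eq_bigl => -[a b] /=; rewrite !inE.
by apply/andb_idl => /interval_is_booleanP[S _ ->]; exact: cover_join_ge.
Qed.

Lemma dk_sum k : dk (L:=L) k = (\sum_(a : L) (deg_down a == k))%N.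
Proof.
by rewrite /dk -sum1_card big_mkcond; apply: eq_bigr => a _; rewrite inE; case: eqP.
Qed.

End Covers.

Local Open Scope ring_scope.

Lemma coefXD1n (R : nzSemiRingType) d k : (('X + 1) ^+ d : {poly R})`_k = 'C(d, k)%:R.
Proof.
have -> : ('X + 1) ^+ d = \poly_(i < d.+1) ('C(d, i)%:R : R).
  by rewrite poly_def exprD1n; apply: eq_bigr => i _; rewrite scaler_nat.
by rewrite coef_poly; case: ltnP => // ltdk; rewrite bin_small.
Qed.

Section DegreePolynomials.
Variables (disp : Order.disp_t) (L : finTBDistrLatticeType disp).

Lemma coef_DL k : (DL L)`_k = (dk (L:=L) k)%:R.
Proof.
rewrite coef_poly; case: ltnP => // mk.
rewrite dk_sum big1 // => a _.
by rewrite ltn_eqF // (leq_ltn_trans (deg_down_le_width a)).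
Qed.

Lemma DL_sum : DL L = \sum_(a : L) 'X^(deg_down a).
Proof.
apply/polyP => k; rewrite coef_DL coef_sum dk_sum natr_sum.
by apply: eq_bigr => a _; rewrite coefXn eq_sym.
Qed.

Lemma QL_sum : QL L = \sum_(a : L) ('X + 1) ^+ deg_down a.
Proof.
apply/polyP => k; rewrite coef_poly coef_sum.
under eq_bigr do rewrite coefXD1n.
rewrite -natr_sum -qk_sum; case: ltnP => // mk.
rewrite qk_sum big1 // => a _.
by rewrite bin_small // (leq_ltn_trans (deg_down_le_width a)).
Qed.

Lemma QL_comp_DL : QL L = DL L \Po ('X + 1).
Proof.
rewrite QL_sum DL_sum (raddf_sum (comp_poly ('X + 1))).
by apply: eq_bigr => a _; rewrite /= comp_Xn_poly.
Qed.

End DegreePolynomials.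

Theorem corollary9 (disp : Order.disp_t) (L : finTBDistrLatticeType disp) :
  [/\ (QL L).[-1] = (DL L).[0], (DL L).[0] = 1,
      (QL L)^`().[-1] = (DL L)^`().[0],
      (DL L)^`().[0] = (@dk disp L 1%N)%:R
    & @dk disp L 1%N = #|@Mi disp L|].
Proof.
have X1 : ('X + 1 : {poly int}).[-1] = 0 by rewrite hornerD hornerX hornerC addNr.
split; last exact: dk1.
- by rewrite QL_comp_DL horner_comp X1.
- by rewrite horner_coef0 coef_DL dk0.
- rewrite QL_comp_DL deriv_comp hornerM horner_comp X1 derivD derivX derivC.
  by rewrite addr0 hornerC mulr1.
- by rewrite horner_coef0 coef_deriv coef_DL.
Qed.
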